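(* Let $R$ be a reflexive relation on $U$ such that $\mathrm{DM(RS)}$ is completely distributive. Then: (i) $\mathcal J^{-}=\{(\emptyset,\{x\}^{\blacktriangle})\mid \{x\}^{\blacktriangle}\in\mathcal J(\wp(U)^{\blacktriangle}),\ x\notin\mathcal S\}$; (ii) if $(\emptyset,\{x\}^{\blacktriangle})\in\mathcal J^{-}$, then for any $z\in\mathfrak{core}\breve R(x)$ we have $g(\emptyset,\{x\}^{\blacktriangle})=(\{z\}^{\vartriangle\blacktriangledown},\{z\}^{\vartriangle\blacktriangle})$, $z\notin\mathcal S$, and $\{z\}^{\vartriangle}$ is completely join-irreducible in $\wp(U)^{\vartriangle}$; (iii) $\mathcal J^{+}=\{(\{x\}^{\vartriangle\blacktriangledown},\{x\}^{\vartriangle\blacktriangle})\mid \{x\}^{\vartriangle}\in\mathcal J(\wp(U)^{\vartriangle}),\ x\notin\mathcal S\}$; (iv) $\mathcal J^{\circ}=\{(\{x\},\{x\}^{\blacktriangle})\mid x\in\mathcal S\}$.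
   Context: Let $U$ be a set and $R\subseteq U\times U$ a binary relation. For $x\in U$, $R(x)=\{y\in U\mid (x,y)\in R\}$ and $\breve R(x)=\{y\in U\mid (y,x)\in R\}$; $\mathfrak{core}\breve R(x)=\{w\in \breve R(x)\mid \text{for all }y\in U,\ w\in \breve R(y)\text{ implies }\breve R(x)\subseteq \breve R(y)\}$. For $X\subseteq U$: $X^{\blacktriangledown}=\{x\in U\mid R(x)\subseteq X\}$, $X^{\blacktriangle}=\{x\in U\mid R(x)\cap X\neq\emptyset\}$, $X^{\triangledown}=\{x\in U\mid \breve R(x)\subseteq X\}$, $X^{\vartriangle}=\{x\in U\mid \breve R(x)\cap X\neq\emptyset\}$; composites like $X^{\vartriangle\blacktriangledown}$ mean $(X^{\vartriangle})^{\blacktriangledown}$. $\wp(U)^{\blacktriangledown}=\{X^{\blacktriangledown}\mid X\subseteq U\}$, and similarly $\wp(U)^{\blacktriangle},\wp(U)^{\vartriangle}$, complete lattices under $\subseteq$. $\mathcal S=\{x\in U\mid |R(x)|=1\}$. $\mathrm{RS}=\{(X^{\blacktriangledown},X^{\blacktriangle})\mid X\subseteq U\}$ ordered coordinatewise; $\mathrm{DM(RS)}$ is its Dedekind–MacNeille completion, identified with $\{(A,B)\in\wp(U)^{\blacktriangledown}\times\wp(U)^{\blacktriangle}\mid A^{\vartriangle\blacktriangle}\subseteq B,\ A\cap\mathcal S=B\cap\mathcal S\}$ ordered coordinatewise, with meets $\bigwedge_i(X_i,Y_i)=(\bigcap_iX_i,(\bigcap_iY_i)^{\triangledown\blacktriangle})$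 and joins $\bigvee_i(X_i,Y_i)=((\bigcup_iX_i)^{\vartriangle\blacktriangledown},\bigcup_iY_i)$. For a complete lattice $L$, $\mathcal J(L)$ is its set of completely join-irreducible elements ($j$ with: $j=\bigvee S$ implies $j\in S$). When $\mathrm{DM(RS)}$ is distributive ($R$ reflexive), it is a Kleene algebra with $\sim(A,B)=(B^c,A^c)$. Writing $\mathcal J=\mathcal J(\mathrm{DM(RS)})$, define for $j\in\mathcal J$ the element $g(j)=\bigwedge\{a\in\mathrm{DM(RS)}\mid a\not\le\sim j\}$ (which lies in $\mathcal J$ and is comparable with $j$), and set $\mathcal J^{-}=\{j\in\mathcal J\mid j<g(j)\}$, $\mathcal J^{\circ}=\{j\in\mathcal J\mid j=g(j)\}$, $\mathcal J^{+}=\{j\in\mathcal J\mid j>g(j)\}$. *)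

From Stdlib Require Import Classical FunctionalExtensionality PropExtensionality.

Set Implicit Arguments.
Definition pset (U : Type) := U -> Prop.
Definition pair_set (U : Type) := (pset U * pset U)%type.

Section RoughSets.
Variable U : Type.
Variable R : U -> U -> Prop.

Definition emptyset : pset U := fun _ => False.
Definition single (x : U) : pset U := fun y => y = x.
Definition compl (X : pset U) : pset U := fun y => ~ X y.
Definition subset (X Y : pset U) : Prop := forall y, X y -> Y y.

Definition Rimg (x : U) : pset U := fun y => R x y.
Definition Rinv (x : U) : pset U := fun y => R y x.

Definition core (x : U) : pset U := fun w =>
  Rinv x w /\ forall y, Rinv y w -> subset (Rinv x) (Rinv y).

(* X^blacktriangledown, X^blacktriangle, X^triangledown, X^vartriangle *)
Definition ubox (X : pset U) : pset U := fun x => subset (Rimg x) X.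
Definition udia (X : pset U) : pset U := fun x => exists y, Rimg x y /\ X y.
Definition lbox (X : pset U) : pset U := fun x => subset (Rinv x) X.
Definition ldia (X : pset U) : pset U := fun x => exists y, Rinv x y /\ X y.

Definition Sset : pset U := fun x => exists y, Rimg x = single y.

Definition image_of (op : pset U -> pset U) : pset U -> Prop :=
  fun A => exists X, A = op X.

Definition is_lub_in (P : pset U -> Prop) (F : pset U -> Prop) (j : pset U) :=
  P j /\ (forall a, F a -> subset a j) /\
  (forall b, P b -> (forall a, F a -> subset a b) -> subset j b).

Definition cji_sets (P : pset U -> Prop) (j : pset U) : Prop :=
  P j /\ forall F : pset U -> Prop, (forall a, F a -> P a) ->
    is_lub_in P F j -> F j.

Definition DM (p : pair_set U) : Prop :=
  image_of ubox (fst p) /\ image_of udia (snd p) /\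
  subset (udia (ldia (fst p))) (snd p) /\
  (forall x, Sset x -> (fst p x <-> snd p x)).

Definition le_pair (p q : pair_set U) : Prop :=
  subset (fst p) (fst q) /\ subset (snd p) (snd q).

Definition lt_pair (p q : pair_set U) : Prop := le_pair p q /\ p <> q.

Definition joinI {K : Type} (a : K -> pair_set U) : pair_set U :=
  (ubox (ldia (fun x => exists k, fst (a k) x)), fun x => exists k, snd (a k) x).

Definition meetI {K : Type} (a : K -> pair_set U) : pair_set U :=
  (fun x => forall k, fst (a k) x, udia (lbox (fun x => forall k, snd (a k) x))).

Definition DM_completely_distributive : Prop :=
  forall (I : Type) (J : I -> Type) (a : forall i, J i -> pair_set U),
    (forall i j, DM (a i j)) ->
    meetI (fun i => joinI (fun j : J i => a i j)) =
    joinI (fun f : (forall i, J i) => meetI (fun i => a i (f i))).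

Definition cjiDM (j : pair_set U) : Prop :=
  DM j /\ forall (K : Type) (a : K -> pair_set U),
    (forall k, DM (a k)) -> j = joinI a -> exists k, j = a k.

Definition neg (p : pair_set U) : pair_set U := (compl (snd p), compl (fst p)).

Definition gmap (j : pair_set U) : pair_set U :=
  meetI (fun a : { a : pair_set U | DM a /\ ~ le_pair a (neg j) } => proj1_sig a).

Definition Jminus (j : pair_set U) : Prop := cjiDM j /\ lt_pair j (gmap j).
Definition Jcirc (j : pair_set U) : Prop := cjiDM j /\ j = gmap j.
Definition Jplus (j : pair_set U) : Prop := cjiDM j /\ lt_pair (gmap j) j.

End RoughSets.

(* Every element of DM(RS) is the join of the elements (∅,{y}^▲), y ∉ S, and
   ({x}^△▼,{x}^△▲) below it, so these contain all completely join-irreducible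
   elements; their irreducibility is that of {y}^▲ in ℘(U)^▲, resp. {x}^△ in
   ℘(U)^△, since both are generated by a single point.  For (∅,{x}^▲),
   complete distributivity yields a point z of core R˘(x), and then
   g(∅,{x}^▲) = ({z}^△▼,{z}^△▲) lies strictly above it.  For ({x}^△▼,{x}^△▲)
   with x ∉ S, the generating point w of {x}^△ gives g ≤ (∅,{w}^▲), which puts g
   strictly below; for x ∈ S the element is ({x},{x}^▲) and g fixes it. *)

From Stdlib Require Import Classical FunctionalExtensionality PropExtensionality.

Set Implicit Arguments.

Lemma set_ext {U : Type} (X Y : pset U) : (forall y, X y <-> Y y) -> X = Y.
Proof.
  intros H. apply functional_extensionality; intro y.
  apply propositional_extensionality; auto.
Qed.

Lemma pair_ext {U : Type} (p q : pair_set U) :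
  (forall y, fst p y <-> fst q y) -> (forall y, snd p y <-> snd q y) -> p = q.
Proof. destruct p, q; simpl; intros; f_equal; apply set_ext; auto. Qed.

Lemma le_pair_antisym {U : Type} (p q : pair_set U) :
  le_pair p q -> le_pair q p -> p = q.
Proof. intros [Hpq1 Hpq2] [Hqp1 Hqp2]. apply pair_ext; split; auto. Qed.

Lemma lt_pair_irrefl {U : Type} (p : pair_set U) : ~ lt_pair p p.
Proof. intros [_ Hne]. exact (Hne eq_refl). Qed.

Lemma lt_pair_asym {U : Type} (p q : pair_set U) : lt_pair p q -> ~ lt_pair q p.
Proof. intros [Hpq Hne] [Hqp _]. exact (Hne (le_pair_antisym Hpq Hqp)). Qed.

Definition bigcup {U : Type} (F : pset U -> Prop) : pset U :=
  fun y => exists a, F a /\ a y.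

Definition union_closed {U : Type} (P : pset U -> Prop) : Prop :=
  forall F, (forall a, F a -> P a) -> P (bigcup F).

Section JoinIrreducibleSets.
Variables (U : Type) (P : pset U -> Prop).

Lemma is_lub_in_bigcup (F : pset U -> Prop) (j : pset U) :
  union_closed P -> (forall a, F a -> P a) -> is_lub_in P F j -> j = bigcup F.
Proof.
  intros HP HF [_ [Hup Hle]]. apply set_ext; intro y; split.
  - apply Hle; [exact (HP F HF)|]. intros a Fa v av. exists a; auto.
  - intros [a [Fa ay]]. exact (Hup a Fa y ay).
Qed.

Lemma cji_sets_point (j : pset U) : cji_sets P j ->
  exists w, j w /\ forall a, P a -> subset a j -> a w -> subset j a.
Proof.
  intros [Pj Hj]. apply NNPP; intro Hno.
  destruct (Hj (fun a => P a /\ subset a j /\ ~ subset j a)) as [_ [_ Hsmall]].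
  - intros a [Pa _]; exact Pa.
  - split; [exact Pj|]. split; [intros a [_ [aj _]]; exact aj|].
    intros b Pb Hb y jy. apply NNPP; intro nby. apply Hno. exists y. split; [exact jy|].
    intros a Pa aj ay. apply NNPP; intro nja. apply nby. exact (Hb a (conj Pa (conj aj nja)) y ay).
  - apply Hsmall. intros y; auto.
Qed.

Lemma cji_sets_of_point (j : pset U) : union_closed P -> P j ->
  (exists w, j w /\ forall a, P a -> subset a j -> a w -> subset j a) -> cji_sets P j.
Proof.
  intros HP Pj [w [jw Hw]]. split; [exact Pj|]. intros F HF Hlub.
  pose proof (is_lub_in_bigcup HP HF Hlub) as Hj.
  assert (jw' : bigcup F w) by (rewrite <- Hj; exact jw).
  destruct jw' as [a [Fa aw]].
  replace j with a; [exact Fa|].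
  apply set_ext; intro y; split.
  - intros ay. rewrite Hj. exists a; auto.
  - apply Hw; [exact (HF a Fa) | | exact aw]. intros v av. rewrite Hj. exists a; auto.
Qed.

End JoinIrreducibleSets.

Section Modalities.
Variables (U : Type) (R : U -> U -> Prop).

Lemma ubox_mono X Y : subset X Y -> subset (ubox R X) (ubox R Y).
Proof. intros H x Hx y Rxy. exact (H y (Hx y Rxy)). Qed.

Lemma udia_mono X Y : subset X Y -> subset (udia R X) (udia R Y).
Proof. intros H x [v [Rxv Xv]]. exists v; auto. Qed.

Lemma lbox_mono X Y : subset X Y -> subset (lbox R X) (lbox R Y).
Proof. intros H x Hx y Ryx. exact (H y (Hx y Ryx)). Qed.

Lemma ldia_mono X Y : subset X Y -> subset (ldia R X) (ldia R Y).
Proof. intros H x [v [Rvx Xv]]. exists v; auto. Qed.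

Lemma ldia_ubox_sub X : subset (ldia R (ubox R X)) X.
Proof. intros y [v [Rvy Hv]]. exact (Hv y Rvy). Qed.

Lemma udia_lbox_sub X : subset (udia R (lbox R X)) X.
Proof. intros y [v [Ryv Hv]]. exact (Hv y Ryv). Qed.

Lemma sub_ubox_ldia X : subset X (ubox R (ldia R X)).
Proof. intros x Xx y Rxy. exists x; auto. Qed.

Lemma sub_lbox_udia X : subset X (lbox R (udia R X)).
Proof. intros x Xx y Ryx. exists x; auto. Qed.

Lemma image_ubox_closed A : image_of (ubox R) A -> subset (ubox R (ldia R A)) A.
Proof. intros [X ->]. apply ubox_mono, ldia_ubox_sub. Qed.

Lemma image_udia_open B : image_of (udia R) B -> subset B (udia R (lbox R B)).
Proof. intros [X ->]. apply udia_mono, sub_lbox_udia. Qed.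

Lemma image_ldia_open C : image_of (ldia R) C -> subset C (ldia R (ubox R C)).
Proof. intros [X ->]. apply ldia_mono, sub_ubox_ldia. Qed.

Lemma ldia_ubox_image C : image_of (ldia R) C -> ldia R (ubox R C) = C.
Proof.
  intros HC. apply set_ext; intro y; split; [apply ldia_ubox_sub | apply image_ldia_open, HC].
Qed.

Lemma union_closed_udia : union_closed (image_of (udia R)).
Proof.
  intros F HF. exists (bigcup (fun a => exists b, F b /\ a = lbox R b)).
  apply set_ext; intro y; split.
  - intros [b [Fb by_]]. destruct (image_udia_open (HF b Fb) y by_) as [v [Ryv Hv]].
    exists v. split; [exact Ryv|]. exists (lbox R b). eauto.
  - intros [v [Ryv [a [[b [Fb ->]] Hv]]]]. exists b. split; [exact Fb | exact (Hv y Ryv)].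
Qed.

Lemma union_closed_ldia : union_closed (image_of (ldia R)).
Proof.
  intros F HF. exists (bigcup (fun a => exists b, F b /\ a = ubox R b)).
  apply set_ext; intro y; split.
  - intros [b [Fb by_]]. destruct (image_ldia_open (HF b Fb) y by_) as [v [Rvy Hv]].
    exists v. split; [exact Rvy|]. exists (ubox R b). eauto.
  - intros [v [Rvy [a [[b [Fb ->]] Hv]]]]. exists b. split; [exact Fb | exact (Hv y Rvy)].
Qed.

Lemma DM_fst_closed p : DM R p -> subset (ubox R (ldia R (fst p))) (fst p).
Proof. intros [HA _]. exact (image_ubox_closed HA). Qed.

Lemma DM_fst_snd p : DM R p -> subset (udia R (ldia R (fst p))) (snd p).
Proof. intros [_ [_ [H _]]]. exact H. Qed.

Lemma joinI_upper {K : Type} (a : K -> pair_set U) k : le_pair (a k) (joinI R a).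
Proof.
  split; simpl.
  - intros x ax y Rxy. exists x. split; [exact Rxy|]. exists k; exact ax.
  - intros y ay. exists k; exact ay.
Qed.

Lemma meetI_lower {K : Type} (a : K -> pair_set U) k : le_pair (meetI R a) (a k).
Proof.
  split; simpl.
  - intros x Hx. exact (Hx k).
  - intros y Hy. exact (udia_lbox_sub Hy k).
Qed.

Lemma gmap_lower j a : DM R a -> ~ le_pair a (neg j) -> le_pair (gmap R j) a.
Proof.
  intros Da Na.
  exact (meetI_lower (fun b : {b | DM R b /\ ~ le_pair b (neg j)} => proj1_sig b)
           (exist _ a (conj Da Na))).
Qed.

Lemma gmap_upper j q : image_of (udia R) (snd q) ->
  (forall a, DM R a -> ~ le_pair a (neg j) -> le_pair q a) -> le_pair q (gmap R j).
Proof.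
  intros Hq H. split; simpl.
  - intros y qy [a [Da Na]]. exact (proj1 (H a Da Na) y qy).
  - intros y qy. refine (udia_mono (lbox_mono _) (image_udia_open Hq y qy)).
    intros v qv [a [Da Na]]. exact (proj2 (H a Da Na) v qv).
Qed.

End Modalities.

Section Reflexive.
Variables (U : Type) (R : U -> U -> Prop).
Hypothesis Hrefl : forall x, R x x.

Lemma Sset_iff s : Sset R s <-> forall y, R s y -> y = s.
Proof.
  split.
  - intros [v Hv] y Rsy.
    assert (Hs : Rimg R s s) by apply Hrefl. assert (Hy : Rimg R s y) by exact Rsy.
    rewrite Hv in Hs, Hy. unfold single in *. congruence.
  - intros H. exists s. apply set_ext; intro y. split; [apply H | intros ->; apply Hrefl].
Qed.

Lemma Sset_eq s y : Sset R s -> R s y -> y = s.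
Proof. intros Ss. exact (proj1 (Sset_iff s) Ss y). Qed.

Lemma udia_single_notS x s : ~ Sset R x -> Sset R s -> ~ udia R (single x) s.
Proof.
  intros nSx Ss [w [Rsw ->]]. apply nSx. rewrite (Sset_eq Ss Rsw). exact Ss.
Qed.

Lemma ubox_emptyset : ubox R (@emptyset U) = @emptyset U.
Proof. apply set_ext; intro y; split; [intros h; exact (h y (Hrefl y)) | intros []]. Qed.

Lemma DM_emptyset_pair B : image_of (udia R) B -> (forall s, Sset R s -> ~ B s) ->
  DM R (@emptyset U, B).
Proof.
  intros HB HS. split; [exists (@emptyset U); symmetry; exact ubox_emptyset|].
  split; [exact HB|]. split.
  - intros y [v [_ [w [_ []]]]].
  - intros s Ss. split; [intros [] | intros Bs; exact (HS s Ss Bs)].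
Qed.

Lemma DM_ubox_udia C : DM R (ubox R C, udia R C).
Proof.
  split; [eexists; reflexivity|]. split; [eexists; reflexivity|]. split.
  - apply udia_mono, ldia_ubox_sub.
  - intros s Ss. simpl. split.
    + intros Hs. exists s. split; [apply Hrefl | exact (Hs s (Hrefl s))].
    + intros [v [Rsv Cv]] w Rsw. rewrite (Sset_eq Ss Rsw). rewrite (Sset_eq Ss Rsv) in Cv. exact Cv.
Qed.

Lemma DM_meetI {K : Type} (a : K -> pair_set U) : (forall k, DM R (a k)) -> DM R (meetI R a).
Proof.
  intros Ha.
  assert (closed : forall k, subset (ubox R (ldia R (fst (a k)))) (fst (a k)))
    by (intro k; exact (DM_fst_closed (Ha k))).
  assert (compat : forall k, subset (udia R (ldia R (fst (a k)))) (snd (a k)))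
    by (intro k; exact (DM_fst_snd (Ha k))).
  assert (below : forall w, (exists v, R v w /\ forall k, fst (a k) v) ->
                       forall u, R u w -> forall k, snd (a k) u).
  { intros w [v [Rvw Av]] u Ruw k. apply compat. exists w. split; [exact Ruw|].
    exists v. split; [exact Rvw | exact (Av k)]. }
  split; [|split; [eexists; reflexivity | split]]; simpl.
  - exists (fun w => forall k, ldia R (fst (a k)) w). apply set_ext; intro y; split.
    + intros Ay w Ryw k. exists y. split; [exact Ryw | exact (Ay k)].
    + intros Hy k. apply closed. intros w Ryw. exact (Hy w Ryw k).
  - intros y [w [Ryw [v [Rvw Av]]]]. exists w. split; [exact Ryw|].
    intros u Ruw k. apply (below w); [exists v; auto | exact Ruw].
  - intros s Ss. split.
    + intros As. exists s. split; [apply Hrefl|]. intros u Rus k.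
      apply (below s); [exists s; split; [apply Hrefl | exact As] | exact Rus].
    + intros [w [Rsw Hw]] k. rewrite (Sset_eq Ss Rsw) in Hw.
      destruct (Ha k) as [_ [_ [_ HS]]]. apply (HS s Ss). exact (Hw s (Hrefl s) k).
Qed.

Definition minus_elt (x : U) : pair_set U := (@emptyset U, udia R (single x)).
Definition plus_elt (x : U) : pair_set U :=
  (ubox R (ldia R (single x)), udia R (ldia R (single x))).
Definition circ_elt (x : U) : pair_set U := (single x, udia R (single x)).

Lemma DM_minus_elt x : DM R (minus_elt x) <-> ~ Sset R x.
Proof.
  split.
  - intros [_ [_ [_ HS]]] Sx. apply (HS x Sx). exists x. split; [apply Hrefl | reflexivity].
  - intros nSx. apply DM_emptyset_pair; [eexists; reflexivity|].
    intros s. exact (udia_single_notS nSx).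
Qed.

Lemma DM_plus_elt x : DM R (plus_elt x).
Proof. apply DM_ubox_udia. Qed.

Lemma plus_elt_Sset x : Sset R x -> plus_elt x = circ_elt x.
Proof.
  intros Sx. assert (ldia_x : ldia R (single x) = single x).
  { apply set_ext; intro y; split.
    - intros [v [Rvy ->]]. exact (Sset_eq Sx Rvy).
    - intros ->. exists x. split; [apply Hrefl | reflexivity]. }
  unfold plus_elt, circ_elt. rewrite ldia_x. f_equal.
  apply set_ext; intro y; split.
  - intros Hy. exact (Hy y (Hrefl y)).
  - intros -> w Rxw. exact (Sset_eq Sx Rxw).
Qed.

Lemma plus_elt_le_ldia x a : DM R a -> subset (ldia R (single x)) (ldia R (fst a)) ->
  le_pair (plus_elt x) a.
Proof.
  intros Da Hx. split.
  - intros y Hy. apply (DM_fst_closed Da). exact (ubox_mono Hx Hy).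
  - intros y Hy. apply (DM_fst_snd Da). exact (udia_mono Hx Hy).
Qed.

Lemma plus_elt_le x a : DM R a -> fst a x -> le_pair (plus_elt x) a.
Proof.
  intros Da ax. apply (plus_elt_le_ldia Da). apply ldia_mono. intros y ->. exact ax.
Qed.

Lemma plus_elt_fst x : fst (plus_elt x) x.
Proof. apply sub_ubox_ldia. reflexivity. Qed.
Arguments plus_elt_fst : clear implicits.

Definition join_generators (p : pair_set U) : Type :=
  ({x | fst p x} + {y | lbox R (snd p) y /\ ~ Sset R y})%type.

Definition generator (p : pair_set U) (k : join_generators p) : pair_set U :=
  match k with
  | inl x => plus_elt (proj1_sig x)
  | inr y => minus_elt (proj1_sig y)
  end.
Arguments generator : clear implicits.

Lemma DM_generator (p : pair_set U) (k : join_generators p) : DM R (generator p k).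
Proof.
  destruct k as [x | [y Hy]]; simpl; [apply DM_plus_elt | apply DM_minus_elt; exact (proj2 Hy)].
Qed.

Lemma DM_join_generators p : DM R p -> p = joinI R (generator p).
Proof.
  intros Dp. pose proof (DM_fst_closed Dp) as closed. pose proof (DM_fst_snd Dp) as compat.
  destruct Dp as [_ [HB [_ HS]]].
  assert (fst_gen : subset (fun v => exists k, fst (generator p k) v) (fst p)).
  { intros v [[[x Ax] | y] Hv]; [|destruct Hv]. simpl in Hv.
    apply closed. revert Hv. apply ubox_mono, ldia_mono. intros w ->. exact Ax. }
  apply pair_ext; simpl; intro y; split.
  - intros Ay w Ryw. exists y. split; [exact Ryw|].
    exists (inl (exist _ y Ay)). apply plus_elt_fst.
  - intros Hy. apply closed. exact (ubox_mono (ldia_mono fst_gen) Hy).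
  - intros By. destruct (image_udia_open HB y By) as [v [Ryv Bv]].
    destruct (classic (Sset R v)) as [Sv | nSv].
    + assert (Av : fst p v) by (apply (HS v Sv); exact (Bv v (Hrefl v))).
      exists (inl (exist _ v Av)). exists v. split; [exact Ryv|].
      exists v. split; [apply Hrefl | reflexivity].
    + exists (inr (exist _ v (conj Bv nSv))). exists v. split; [exact Ryv | reflexivity].
  - intros [[[x Ax] | [v Hv]] Hy]; simpl in Hy.
    + apply compat. revert Hy. apply udia_mono, ldia_mono. intros w ->. exact Ax.
    + destruct Hy as [w [Ryw ->]]. exact (proj1 Hv y Ryw).
Qed.

Lemma cjiDM_cases j : cjiDM R j ->
  (exists x, ~ Sset R x /\ j = minus_elt x) \/ (exists x, j = plus_elt x).
Proof.
  intros [Dj Hj].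
  destruct (Hj _ (generator j) (@DM_generator j) (DM_join_generators Dj))
    as [[x | y] Hk]; simpl in Hk.
  - right. exists (proj1_sig x). exact Hk.
  - left. exists (proj1_sig y). split; [exact (proj2 (proj2_sig y)) | exact Hk].
Qed.

Lemma cji_udia_of_cjiDM_minus x : cjiDM R (minus_elt x) ->
  cji_sets (image_of (udia R)) (udia R (single x)).
Proof.
  intros [Dx Hx]. apply DM_minus_elt in Dx.
  split; [eexists; reflexivity|]. intros F HF Hlub.
  pose proof (is_lub_in_bigcup (@union_closed_udia U R) HF Hlub) as Hx_eq.
  assert (HFx : forall B, F B -> subset B (udia R (single x))).
  { intros B FB y By. rewrite Hx_eq. exists B; auto. }
  destruct (Hx {B | F B} (fun B => (@emptyset U, proj1_sig B))) as [[B FB] E].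
  - intros [B FB]. apply DM_emptyset_pair; [exact (HF B FB)|].
    intros s Ss Bs. exact (udia_single_notS Dx Ss (HFx B FB s Bs)).
  - apply pair_ext; intro y; simpl; split.
    + intros [].
    + intros h. destruct (h y (Hrefl y)) as [v [_ [_ []]]].
    + rewrite Hx_eq. intros [B [FB By]]. exists (exist _ B FB). exact By.
    + intros [[B FB] By]. exact (HFx B FB y By).
  - unfold minus_elt in E. injection E as ->. exact FB.
Qed.

Lemma cjiDM_minus_of_cji_udia x : ~ Sset R x ->
  cji_sets (image_of (udia R)) (udia R (single x)) -> cjiDM R (minus_elt x).
Proof.
  intros nSx Hc. destruct (cji_sets_point Hc) as [w [xw Hw]].
  split; [apply DM_minus_elt; exact nSx|]. intros K a Ha E.
  assert (Hw' : snd (joinI R a) w) by (rewrite <- E; exact xw).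
  destruct Hw' as [k Hk]. exists k.
  assert (upper : le_pair (a k) (minus_elt x)) by (rewrite E; apply joinI_upper).
  destruct (Ha k) as [_ [HB _]].
  apply le_pair_antisym; [split | exact upper].
  - intros _ [].
  - exact (Hw _ HB (proj2 upper) Hk).
Qed.

Lemma cji_ldia_of_cjiDM_plus x : cjiDM R (plus_elt x) ->
  cji_sets (image_of (ldia R)) (ldia R (single x)).
Proof.
  intros [_ Hx]. split; [eexists; reflexivity|]. intros F HF Hlub.
  pose proof (is_lub_in_bigcup (@union_closed_ldia U R) HF Hlub) as Hx_eq.
  set (a := fun C : {C | F C} => (ubox R (proj1_sig C), udia R (proj1_sig C))).
  assert (ldia_join : forall w, ldia R (single x) w <->
                        ldia R (fun v => exists C, fst (a C) v) w).
  { intros w. rewrite Hx_eq. split.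
    - intros [C [FC Cw]]. destruct (image_ldia_open (HF C FC) w Cw) as [v [Rvw Hv]].
      exists v. split; [exact Rvw|]. exists (exist _ C FC). exact Hv.
    - intros [v [Rvw [[C FC] Hv]]]. exists C. split; [exact FC | exact (Hv w Rvw)]. }
  destruct (Hx _ a (fun C => DM_ubox_udia _)) as [[C FC] E].
  - apply pair_ext; simpl; intro y; split.
    + intros h w Ryw. apply ldia_join, h, Ryw.
    + intros h w Ryw. apply ldia_join, h, Ryw.
    + intros [v [Ryv hv]]. rewrite Hx_eq in hv. destruct hv as [C [FC Cv]].
      exists (exist _ C FC). exists v. split; assumption.
    + intros [[C FC] h]. revert h. apply udia_mono. intros v Cv. rewrite Hx_eq. exists C; auto.
  - unfold plus_elt, a in E. injection E as Hbox _. simpl in Hbox.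
    replace (ldia R (single x)) with C; [exact FC|].
    rewrite <- (ldia_ubox_image (HF C FC)), <- Hbox.
    apply ldia_ubox_image. eexists; reflexivity.
Qed.

Lemma cjiDM_plus_of_cji_ldia x :
  cji_sets (image_of (ldia R)) (ldia R (single x)) -> cjiDM R (plus_elt x).
Proof.
  intros Hc. destruct (cji_sets_point Hc) as [w [[u [Rxw ->]] Hw]].
  split; [apply DM_plus_elt|]. intros K a Ha E.
  assert (hx : fst (joinI R a) x) by (rewrite <- E; apply plus_elt_fst).
  destruct (hx w Rxw) as [v [Rvw [k av]]]. exists k.
  assert (upper : le_pair (a k) (plus_elt x)) by (rewrite E; apply joinI_upper).
  apply le_pair_antisym; [|exact upper].
  apply (plus_elt_le_ldia (Ha k)). apply Hw.
  - eexists; reflexivity.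
  - intros y Hy. exact (ldia_ubox_sub (ldia_mono (proj1 upper) Hy)).
  - exists v. split; assumption.
Qed.

Lemma minus_elt_lt_plus_elt x z : R z x -> lt_pair (minus_elt x) (plus_elt z).
Proof.
  intros Rzx. split.
  - split; [intros _ []|]. intros y [w [Ryw ->]]. exists x. split; [exact Ryw|].
    exists z. split; [exact Rzx | reflexivity].
  - intros E. pose proof (plus_elt_fst z) as Hz. rewrite <- E in Hz. exact Hz.
Qed.

Lemma gmap_minus_elt_core x z : core R x z -> gmap R (minus_elt x) = plus_elt z.
Proof.
  intros [Rzx Hz]. apply le_pair_antisym.
  - apply gmap_lower; [apply DM_plus_elt|]. intros [Hfst _].
    apply (Hfst z (plus_elt_fst z)). exists x. split; [exact Rzx | reflexivity].
  - apply gmap_upper; [eexists; reflexivity|]. intros a Da Na.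
    assert (Hy : exists y, fst a y /\ R y x).
    { apply NNPP; intro Hno. apply Na. split; simpl.
      - intros y ay [w [Ryw ->]]. apply Hno. eauto.
      - intros y _ []. }
    destruct Hy as [y [ay Ryx]]. apply (plus_elt_le_ldia Da).
    intros w [v [Rvw ->]]. exists y. split; [exact (Hz w Rvw y Ryx) | exact ay].
Qed.

Lemma cji_ldia_core x z : core R x z -> cji_sets (image_of (ldia R)) (ldia R (single z)).
Proof.
  intros [Rzx Hz]. apply cji_sets_of_point; [apply union_closed_ldia | eexists; reflexivity|].
  exists x. split; [exists z; split; [exact Rzx | reflexivity]|].
  intros a [X ->] _ [y [Ryx Xy]] v [u [Rzv ->]].
  exists y. split; [exact (Hz v Rzv y Ryx) | exact Xy].
Qed.

(* The point [w] generating {x}^△ is outside [Sset R] (otherwise minimality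
   forces R(x) = {x}), so (∅,{w}^▲) is a DM element not below the negation of
   [plus_elt x]; g lies below it, hence strictly below [plus_elt x]. *)
Lemma gmap_plus_elt_lt x : cjiDM R (plus_elt x) -> ~ Sset R x ->
  lt_pair (gmap R (plus_elt x)) (plus_elt x).
Proof.
  intros Hc nSx. destruct (cji_sets_point (cji_ldia_of_cjiDM_plus Hc)) as [w [[u [Rxw ->]] Hw]].
  assert (nSw : ~ Sset R w).
  { intros Sw. apply nSx. apply Sset_iff. intros y Rxy.
    assert (Hsub : subset (ldia R (single x)) (ldia R (single w))).
    { apply Hw; [eexists; reflexivity | | exists w; split; [apply Hrefl | reflexivity]].
      intros v [u [Rwv ->]]. rewrite (Sset_eq Sw Rwv). exists x. split; [exact Rxw | reflexivity]. }
    destruct (Hsub y (ex_intro _ x (conj Rxy eq_refl))) as [u [Rwy ->]].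
    destruct (Hsub x (ex_intro _ x (conj (Hrefl x) eq_refl))) as [u [Rwx ->]].
    rewrite (Sset_eq Sw Rwy). symmetry. exact (Sset_eq Sw Rwx). }
  assert (below_minus : le_pair (gmap R (plus_elt x)) (minus_elt w)).
  { apply gmap_lower; [apply DM_minus_elt; exact nSw|]. intros [_ Hsnd].
    exact (Hsnd x (ex_intro _ w (conj Rxw eq_refl)) (plus_elt_fst x)). }
  split.
  - apply gmap_lower; [apply DM_plus_elt|]. intros [Hfst _].
    apply (Hfst x (plus_elt_fst x)). exists x. split; [apply Hrefl|].
    exists x. split; [apply Hrefl | reflexivity].
  - intros E. apply (proj1 below_minus x). rewrite E. apply plus_elt_fst.
Qed.

Lemma gmap_circ_elt x : Sset R x -> gmap R (circ_elt x) = circ_elt x.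
Proof.
  intros Sx. rewrite <- (plus_elt_Sset Sx) at 2. apply le_pair_antisym.
  - apply gmap_lower; [apply DM_plus_elt|]. intros [Hfst _].
    apply (Hfst x (plus_elt_fst x)). exists x. split; [apply Hrefl | reflexivity].
  - apply gmap_upper; [eexists; reflexivity|]. intros a Da Na.
    apply plus_elt_le; [exact Da|]. apply NNPP; intro nax. apply Na. split; simpl.
    + intros y ay [w [Ryw ->]]. apply nax, (DM_fst_closed Da).
      intros v Rxv. rewrite (Sset_eq Sx Rxv). exists y. split; assumption.
    + intros y ay ->. destruct Da as [_ [_ [_ HS]]]. exact (nax (proj2 (HS x Sx) ay)).
Qed.

Lemma cjiDM_circ_elt x : Sset R x -> cjiDM R (circ_elt x).
Proof.
  intros Sx. rewrite <- (plus_elt_Sset Sx). apply cjiDM_plus_of_cji_ldia.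
  apply cji_sets_of_point; [apply union_closed_ldia | eexists; reflexivity|].
  exists x. split; [exists x; split; [apply Hrefl | reflexivity]|].
  intros a _ _ ax y [u [Rxy ->]]. rewrite (Sset_eq Sx Rxy). exact ax.
Qed.

(* [circ_elt y] if [y] is in [Sset R], [minus_elt y] otherwise; unlike both,
   it lies in DM(RS) for every [y]. *)
Definition dia_elt (y : U) : pair_set U := (fun v => v = y /\ Sset R y, udia R (single y)).

Lemma DM_dia_elt y : DM R (dia_elt y).
Proof.
  destruct (classic (Sset R y)) as [Sy | nSy].
  - replace (dia_elt y) with (circ_elt y); [rewrite <- (plus_elt_Sset Sy); apply DM_plus_elt|].
    apply pair_ext; simpl; intro v; [unfold single; tauto | reflexivity].
  - replace (dia_elt y) with (minus_elt y); [apply DM_minus_elt; exact nSy|].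
    apply pair_ext; simpl; intro v; [unfold emptyset; tauto | reflexivity].
Qed.

Hypothesis Hcd : DM_completely_distributive R.

(* Without a core point, {x}^▲ is covered by the sets {y}^▲ with
   R˘(x) ⊄ R˘(y).  Distributing (∅,{x}^▲) over the join of the [dia_elt y]
   and using irreducibility gives (∅,{x}^▲) ≤ dia_elt y for one such y,
   i.e. R˘(x) ⊆ R˘(y): a contradiction. *)
Lemma core_of_cjiDM_minus x : cjiDM R (minus_elt x) -> exists z, core R x z.
Proof.
  intros [Dx Hx]. apply NNPP; intro no_core.
  set (K := {y | exists u, R u x /\ ~ R u y}).
  assert (covered : forall v, R v x -> exists y : K, R v (proj1_sig y)).
  { intros v Rvx. apply NNPP; intro Hv. apply no_core. exists v. split; [exact Rvx|].
    intros y Rvy u Rux. apply NNPP; intro nRuy. apply Hv.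
    exists (exist _ y (ex_intro _ u (conj Rux nRuy))). exact Rvy. }
  set (J := fun b : bool => if b return Type then unit else K).
  set (a := fun b : bool => match b return J b -> pair_set U with
                            | true => fun _ => minus_elt x
                            | false => fun y => dia_elt (proj1_sig y)
                            end).
  assert (Ha : forall b k, DM R (a b k)) by (intros [|] k; [exact Dx | apply DM_dia_elt]).
  assert (meet_join : meetI R (fun b => joinI R (a b)) = minus_elt x).
  { apply pair_ext; intro y; simpl; split.
    - intros Hy. destruct (Hy true y (Hrefl y)) as [v [_ [_ []]]].
    - intros [].
    - intros Hy. destruct (udia_lbox_sub Hy true) as [t Hxy]. exact Hxy.
    - intros Hy. apply (image_udia_open (ex_intro _ (single x) eq_refl)) in Hy.
      revert Hy. apply udia_mono, lbox_mono. intros v Hv [|].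
      + exists tt. exact Hv.
      + destruct Hv as [w [Rvw ->]]. destruct (covered v Rvw) as [k Rk].
        exists k. exists (proj1_sig k). split; [exact Rk | reflexivity]. }
  destruct (Hx _ (fun f : forall b, J b => meetI R (fun b => a b (f b)))) as [f Hf].
  - intro f. apply DM_meetI. intro b. apply Ha.
  - rewrite <- meet_join. exact (Hcd J a Ha).
  - destruct (proj2_sig (f false)) as [u [Rux nRuy]].
    assert (Hu : snd (minus_elt x) u) by (exists x; split; [exact Rux | reflexivity]).
    rewrite Hf in Hu.
    destruct (proj2 (meetI_lower R (fun b => a b (f b)) false) u Hu) as [w [Ruw ->]].
    exact (nRuy Ruw).
Qed.

Lemma minus_elt_lt_gmap x : cjiDM R (minus_elt x) -> lt_pair (minus_elt x) (gmap R (minus_elt x)).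
Proof.
  intros Hc. destruct (core_of_cjiDM_minus Hc) as [z Hz].
  rewrite (gmap_minus_elt_core Hz). exact (minus_elt_lt_plus_elt (proj1 Hz)).
Qed.

Lemma gmap_plus_elt_Sset x : Sset R x -> gmap R (plus_elt x) = plus_elt x.
Proof. intros Sx. rewrite (plus_elt_Sset Sx). exact (gmap_circ_elt Sx). Qed.

Lemma Jminus_iff j : Jminus R j <->
  exists x, j = minus_elt x /\ cji_sets (image_of (udia R)) (udia R (single x)) /\ ~ Sset R x.
Proof.
  split.
  - intros [Hc Hlt]. destruct (cjiDM_cases Hc) as [[x [nSx ->]] | [x ->]].
    + exists x. split; [reflexivity|]. split; [exact (cji_udia_of_cjiDM_minus Hc) | exact nSx].
    + exfalso. destruct (classic (Sset R x)) as [Sx | nSx].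
      * rewrite (gmap_plus_elt_Sset Sx) in Hlt. exact (lt_pair_irrefl Hlt).
      * exact (lt_pair_asym Hlt (gmap_plus_elt_lt Hc nSx)).
  - intros [x [-> [Hcji nSx]]]. pose proof (cjiDM_minus_of_cji_udia nSx Hcji) as Hc.
    split; [exact Hc | exact (minus_elt_lt_gmap Hc)].
Qed.

Lemma gmap_Jminus x : Jminus R (minus_elt x) -> forall z, core R x z ->
  gmap R (minus_elt x) = plus_elt z /\ ~ Sset R z /\
  cji_sets (image_of (ldia R)) (ldia R (single z)).
Proof.
  intros [[Dx _] _] z Hz. split; [exact (gmap_minus_elt_core Hz)|].
  split; [|exact (cji_ldia_core Hz)].
  intros Sz. apply DM_minus_elt in Dx. apply Dx. rewrite (Sset_eq Sz (proj1 Hz)). exact Sz.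
Qed.

Lemma Jplus_iff j : Jplus R j <->
  exists x, j = plus_elt x /\ cji_sets (image_of (ldia R)) (ldia R (single x)) /\ ~ Sset R x.
Proof.
  split.
  - intros [Hc Hlt]. destruct (cjiDM_cases Hc) as [[x [_ ->]] | [x ->]].
    + exfalso. exact (lt_pair_asym Hlt (minus_elt_lt_gmap Hc)).
    + exists x. split; [reflexivity|]. split; [exact (cji_ldia_of_cjiDM_plus Hc)|].
      intros Sx. rewrite (gmap_plus_elt_Sset Sx) in Hlt. exact (lt_pair_irrefl Hlt).
  - intros [x [-> [Hcji nSx]]]. pose proof (cjiDM_plus_of_cji_ldia Hcji) as Hc.
    split; [exact Hc | exact (gmap_plus_elt_lt Hc nSx)].
Qed.

Lemma Jcirc_iff j : Jcirc R j <-> exists x, Sset R x /\ j = circ_elt x.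
Proof.
  split.
  - intros [Hc Hfix]. destruct (cjiDM_cases Hc) as [[x [_ ->]] | [x ->]].
    + exfalso. pose proof (minus_elt_lt_gmap Hc) as Hlt. rewrite <- Hfix in Hlt.
      exact (lt_pair_irrefl Hlt).
    + destruct (classic (Sset R x)) as [Sx | nSx].
      * exists x. split; [exact Sx | exact (plus_elt_Sset Sx)].
      * exfalso. pose proof (gmap_plus_elt_lt Hc nSx) as Hlt. rewrite <- Hfix in Hlt.
        exact (lt_pair_irrefl Hlt).
  - intros [x [Sx ->]]. split; [exact (cjiDM_circ_elt Sx) | symmetry; exact (gmap_circ_elt Sx)].
Qed.

End Reflexive.

Theorem mainTheorem7 (U : Type) (R : U -> U -> Prop)
  (Hrefl : forall x, R x x)
  (Hcd : DM_completely_distributive R) :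
  (* (i) *)
  (forall j, Jminus R j <->
     exists x, j = (@emptyset U, udia R (single x)) /\
               cji_sets (image_of (udia R)) (udia R (single x)) /\
               ~ Sset R x) /\
  (* (ii) *)
  (forall x, Jminus R (@emptyset U, udia R (single x)) ->
     forall z, core R x z ->
       gmap R (@emptyset U, udia R (single x)) =
         (ubox R (ldia R (single z)), udia R (ldia R (single z))) /\
       ~ Sset R z /\
       cji_sets (image_of (ldia R)) (ldia R (single z))) /\
  (* (iii) *)
  (forall j, Jplus R j <->
     exists x, j = (ubox R (ldia R (single x)), udia R (ldia R (single x))) /\
               cji_sets (image_of (ldia R)) (ldia R (single x)) /\
               ~ Sset R x) /\
  (* (iv) *)
  (forall j, Jcirc R j <->
     exists x, Sset R x /\ j = (single x, udia R (single x))).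
Proof.
  split; [|split; [|split]].
  - exact (Jminus_iff Hrefl Hcd).
  - exact (gmap_Jminus Hrefl).
  - exact (Jplus_iff Hrefl Hcd).
  - exact (Jcirc_iff Hrefl Hcd).
Qed.
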